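(* Let $(M,d)$ be a complete separable geodesic space and $m\in\mathcal P_2(M)$ such that (A1) and (A2) hold. Let $\beta>0$ and suppose each loss $\ell_t$ ($t\ge1$) is measurable and geodesically $\beta$-expconcave, and that the \textsc{ewb} forecaster with $\beta_t=\beta$ is well defined (normalizing integrals finite and positive, each $m_t\in\mathcal P_2(M)$). Then for all $n\ge1$, with $L_n=\sum_{t=1}^n\ell_t$, \[\sum_{t=1}^n\ell_t(x_t)\le\inf_\mu\Big\{\int_ML_n\,\mathrm d\mu+\frac{\mathcal E(\mu|m)}{\beta}\Big\},\] where the infimum runs over probability measures $\mu$ on $M$ for which $\int L_n\,\mathrm d\mu$ is well defined.
   Context: Geodesic: path $\gamma:[0,1]\to M$ with $d(\gamma(s),\gamma(t))=|t-s|d(\gamma(0),\gamma(1))$. $f$ is geodesically convex if $t\mapsto f(\gamma(t))$ is convex for every geodesic; geodesically concave if $-f$ is; geodesically $\beta$-expconcave if $e^{-\beta f}$ is geodesically concave. $\mathcal P_2(M)$: Borel probability measures with $\int d^2(x,y)\mu(\mathrm dy)<\infty$ for all $x$; barycenter: minimizer of $x\mapsto\int d^2(x,y)\mu(\mathrm dy)$. (A1): every $\mu\in\mathcal P_2(M)$ has a barycenter. (A2): for every $\mu\in\mathcal P_2(M)$, barycenter $x^*$ of $\mu$ and geodesically convex $f:M\to\mathbb R$ either positive or in $L^1(\mu)$, $f(x^* )\le\int f\mathrm d\mu$. Relative entropy: $\mathcal E(\mu|m)=\int\ln(\mathrm d\mu/\mathrm dm)\,\mathrm d\mu$ if $\mu\ll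 m$, $+\infty$ otherwise. \textsc{ewb} forecaster with parameter $\beta$: $m_1=m$, $\mathrm dm_{t+1}=e^{-\beta\ell_t}\mathrm dm_t/\int e^{-\beta\ell_t}\mathrm dm_t$, $x_t$ any barycenter of $m_t$. *)

From HB Require Import structures.
From mathcomp Require Import all_boot all_order all_algebra.
From mathcomp Require Import all_classical all_reals all_analysis.
Set Implicit Arguments.
Unset Strict Implicit.
Unset Printing Implicit Defensive.
Import Order.TTheory GRing.Theory Num.Theory.
Local Open Scope classical_set_scope.
Local Open Scope ring_scope.

Section Defs.
Context (R : realType) {disp : measure_display} (M : measurableType disp).
Variable dist : M -> M -> R.

Definition is_metric : Prop :=
  [/\ forall x y, dist x y = 0 <-> x = y,
      forall x y, dist x y = dist y x &
      forall x y z, dist x z <= dist x y + dist y z].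

Definition metric_complete : Prop :=
  forall u : nat -> M,
    (forall e : R, 0 < e -> exists N, forall p q, (N <= p)%N -> (N <= q)%N ->
        dist (u p) (u q) < e) ->
    exists l, forall e : R, 0 < e -> exists N, forall n, (N <= n)%N -> dist (u n) l < e.

Definition metric_separable : Prop :=
  exists D : nat -> M, forall x (e : R), 0 < e -> exists n, dist x (D n) < e.

Definition dopen (A : set M) : Prop :=
  forall x, A x -> exists2 e : R, 0 < e & forall y, dist x y < e -> A y.

Definition borel_of_dist : Prop := (@measurable _ M) = <<s dopen >>.

(* geodesic: path gamma : [0,1] -> M (values outside [0,1] irrelevant) *)
Definition is_geodesic (g : R -> M) : Prop :=
  forall s t : R, 0 <= s <= 1 -> 0 <= t <= 1 ->
    dist (g s) (g t) = `|t - s| * dist (g 0) (g 1).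

Definition geodesic_space : Prop :=
  forall x y, exists g, [/\ is_geodesic g, g 0 = x & g 1 = y].

Definition geod_convex (f : M -> R) : Prop :=
  forall g, is_geodesic g -> forall s t l : R,
    0 <= s <= 1 -> 0 <= t <= 1 -> 0 <= l <= 1 ->
    f (g ((1 - l) * s + l * t)) <= (1 - l) * f (g s) + l * f (g t).

Definition geod_concave (f : M -> R) : Prop := geod_convex (fun x => - f x).

Definition geod_expconcave (beta : R) (f : M -> R) : Prop :=
  geod_concave (fun x => expR (- (beta * f x))).

Definition in_P2 (mu : probability M R) : Prop :=
  forall x, (\int[mu]_y ((dist x y) ^+ 2)%:E < +oo)%E.

Definition barycenter (mu : probability M R) (x : M) : Prop :=
  forall z, (\int[mu]_y ((dist x y) ^+ 2)%:E <= \int[mu]_y ((dist z y) ^+ 2)%:E)%E.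

Definition A1 : Prop := forall mu, in_P2 mu -> exists x, barycenter mu x.

(* "positive" read as nonnegative; integrals only make sense for measurable f *)
Definition A2 : Prop :=
  forall (mu : probability M R) (x : M) (f : M -> R),
    in_P2 mu -> barycenter mu x -> geod_convex f ->
    ((measurable_fun setT f /\ forall y, 0 <= f y) \/
      mu.-integrable setT (EFin \o f)) ->
    ((f x)%:E <= \int[mu]_y (f y)%:E)%E.

Definition rel_entropy (mu m : probability M R) : \bar R :=
  if pselect (charge_of_finite_measure mu `<< m) then
    (\int[mu]_x (ln (fine (Radon_Nikodym (charge_of_finite_measure mu) m x)))%:E)%E
  else +oo%E.

(* the integral of f w.r.t. mu is well defined (not +oo - +oo) *)
Definition integral_well_defined (mu : probability M R) (f : M -> R) : Prop :=
  measurable_fun setT f /\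
  ((\int[mu]_x ((EFin \o f)^\+ x) < +oo)%E \/ (\int[mu]_x ((EFin \o f)^\- x) < +oo)%E).

End Defs.

From HB Require Import structures.
From mathcomp Require Import all_boot all_order all_algebra.
From mathcomp Require Import all_classical all_reals all_analysis.
From mathcomp Require Import measurable_realfun ring lra.
Import Order.TTheory GRing.Theory Num.Theory Num.Def.
Local Open Scope classical_set_scope.
Local Open Scope ring_scope.

(* Write [Z_t = \int e^(-beta loss_t) dm_t] for the normalizers of the
   forecaster and [W_n = Z_1 ... Z_n].  The proof has two halves.

   1. Upper bound on the forecaster.  Since [-e^(-beta loss_t)] is
      geodesically convex, the Jensen inequality (A2) at the barycenter
      [x_t] of [m_t] gives [e^(-beta loss_t(x_t)) >= Z_t], i.e.
      [loss_t(x_t) <= -ln Z_t / beta]; summing, the cumulative loss is at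
      most [-ln W_n / beta].

   2. Lower bound on the comparators.  Telescoping the updates, [m_(n+1)]
      has density [e^(-beta L_n) / W_n] with respect to [m], so this Gibbs
      weight has mass 1.  The Gibbs variational inequality (a
      Fenchel-Young inequality for [a ln a], integrated) then gives
      [-ln W_n / beta <= \int L_n dmu + E(mu|m) / beta] for every [mu]. *)

Section density.
Context {d : measure_display} {T : measurableType d} {R : realType}.
Local Open Scope ereal_scope.

(* This
   reduces to the library's change of variables for the Radon-Nikodym
   derivative, since densities are unique up to [mu]-null sets. *)
Lemma integral_density (nu : {finite_measure set T -> \bar R})
    (mu : {sigma_finite_measure set T -> \bar R}) (h : T -> R) :
  (forall x, 0 <= h x)%R -> measurable_fun setT h ->
  (forall A, measurable A -> nu A = \int[mu]_(x in A) (h x)%:E) ->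
  forall f : T -> \bar R, (forall x, 0 <= f x) -> measurable_fun setT f ->
  \int[mu]_x (f x * (h x)%:E) = \int[nu]_x f x.
Proof.
move=> h0 mh nuh f f0 mf.
have mEh : measurable_fun setT (EFin \o h) by exact/measurable_EFinP.
have numu : nu `<< mu.
  apply/null_content_dominatesP => A mA muA0; rewrite nuh //.
  exact: (null_set_integral mA (measurable_funTS mEh) muA0).
have hint : mu.-integrable setT (EFin \o h).
  apply/integrableP; split => //.
  under eq_integral do rewrite /comp abse_EFin ger0_norm //.
  by rewrite -nuh // ltey_eq fin_num_measure.
have mRN := measurable_int _ (Radon_Nikodym_SigmaFinite.f_integrable numu).
have h_RN : ae_eq mu setT (EFin \o h) (Radon_Nikodym_SigmaFinite.f nu mu).
  apply: integral_ae_eq => // E _ mE.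
  by rewrite -nuh // -Radon_Nikodym_SigmaFinite.f_integral.
rewrite -(Radon_Nikodym_SigmaFinite.change_of_variables numu) //.
apply: ae_eq_integral => //; try exact: emeasurable_funM.
exact: ae_eqe_mul2l.
Qed.

End density.

(* Fenchel-Young inequality for the entropy function, in the truncated form
   [a (s - ln a)^+ <= e^(s-1)]; it bounds the parts of the Gibbs argument
   that must be integrated against the density [a]. *)
Lemma mul_posp_sub_ln_le {R : realType} (a s : R) :
  0 <= a -> a * maxr (s - ln a) 0 <= expR (s - 1).
Proof.
move=> a0; have [->|a_neq0] := eqVneq a 0; first by rewrite mul0r expR_ge0.
have a_gt0 : 0 < a by rewrite lt_def a_neq0.
rewrite /maxr; case: ifPn => [_|_]; first by rewrite mulr0 expR_ge0.
have -> : expR (s - 1) = a * expR (s - 1 - ln a).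
  by rewrite [expR (s - 1 - _)]expRD expRN lnK ?posrE // mulrCA divff ?gt_eqF // mulr1.
rewrite ler_pM2l //; have := expR_ge1Dx (s - 1 - ln a); lra.
Qed.

Section nonneg_integrals.
Context {d : measure_display} {T : measurableType d} {R : realType}.
Local Open Scope ereal_scope.

Lemma integral_cst_probability (mu : probability T R) (k : R) :
  \int[mu]_x k%:E = k%:E.
Proof.
rewrite integral_cst // -[in RHS](mule1 k%:E).
by congr (_ * _); exact: probability_setT.
Qed.

Lemma integral_ge0_combination (mu : probability T R) (f g h : T -> R) (b k : R) :
  (0 <= b)%R -> (0 <= k)%R ->
  (forall x, 0 <= f x)%R -> (forall x, 0 <= g x)%R -> (forall x, 0 <= h x)%R ->
  measurable_fun setT f -> measurable_fun setT g -> measurable_fun setT h ->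
  \int[mu]_x (f x + b * g x + h x + k)%:E =
  \int[mu]_x (f x)%:E + b%:E * \int[mu]_x (g x)%:E + \int[mu]_x (h x)%:E + k%:E.
Proof.
move=> b0 k0 f0 g0 h0 mf mg mh.
have mE (e : T -> R) : measurable_fun setT e -> measurable_fun setT (EFin \o e).
  by move=> me; exact/measurable_EFinP.
have mEf := mE f mf; have mEg := mE g mg; have mEh := mE h mh.
have mbg : measurable_fun setT (fun x => b%:E * (g x)%:E).
  exact: emeasurable_funM.
under eq_integral do rewrite !EFinD EFinM.
rewrite ge0_integralD //; last 2 first.
- by move=> x _; rewrite !adde_ge0 ?mule_ge0 ?lee_fin.
- by apply: emeasurable_funD => //; exact: emeasurable_funD.
rewrite ge0_integralD //; last 3 first.
- by move=> x _; rewrite adde_ge0 ?mule_ge0 ?lee_fin.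
- exact: emeasurable_funD.
- by move=> x _; rewrite lee_fin.
rewrite ge0_integralD //; last 2 first.
- by move=> x _; rewrite lee_fin.
- by move=> x _; rewrite mule_ge0 ?lee_fin.
rewrite ge0_integralZl //; last by move=> x _; rewrite lee_fin.
by rewrite integral_cst_probability.
Qed.

End nonneg_integrals.

Section extended_arithmetic.
Context {R : realType}.
Local Open Scope ereal_scope.

(* The final bookkeeping of the Gibbs inequality in extended reals: [Lp, Lm]
   and [Up, Um] are the positive and negative parts of the integrals of the
   loss and of the log-density, [Wt] the integral of the slack, and [cp, cm]
   the positive and negative parts of the constant [1 - lW].  Since [Um] and
   [Wt] are finite, the inequality between the nonnegative sums yields the
   lower bound for the (upper) sum [dual_adde], whatever the infinite terms. *)
Lemma dual_adde_lower_bound (Up Um Lp Lm Wt : \bar R) (b cp cm lW : R) :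
  (0 < b)%R -> 0 <= Up -> 0 <= Um <= 1 -> 0 <= Lp -> 0 <= Lm -> 0 <= Wt <= 1 ->
  (cp - cm = 1 - lW)%R -> (Lp < +oo \/ Lm < +oo) ->
  Um + b%:E * Lm + 0 + cp%:E <= Up + b%:E * Lp + Wt + cm%:E ->
  (- lW / b)%:E <= dual_adde (Lp - Lm) ((Up - Um) * (b^-1)%:E).
Proof.
move=> b0 Up0 /andP[Um0 Um1] Lp0 Lm0 /andP[Wt0 Wt1] ec Lfin ineq.
have [um eUm] : exists um : R, Um = um%:E.
  by exists (fine Um); rewrite fineK // ge0_fin_numE // (le_lt_trans Um1) ?ltry.
have [wt eWt] : exists wt : R, Wt = wt%:E.
  by exists (fine Wt); rewrite fineK // ge0_fin_numE // (le_lt_trans Wt1) ?ltry.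
subst Um Wt; rewrite lee_fin in Wt1.
move: Up Lp Lm Up0 Lp0 Lm0 Lfin ineq.
case=> [up| |] [lp| |] [lm| |] //=; rewrite ?lee_fin ?leey ?ltry ?ltxx //=;
  rewrite ?(gt0_muley (x := b%:E)) ?(gt0_mulye (x := b^-1%:E)) ?lte_fin ?invr_gt0 //=;
  rewrite ?DualAddTheoryNumDomain.daddey ?leey //; try by move=> ? ? ? [].
move=> _ _ _ _ ineq.
have -> : (lp - lm + (up - um) / b = (b * (lp - lm) + (up - um)) / b)%R.
  by field; rewrite gt_eqF.
rewrite ler_pM2r ?invr_gt0 //; lra.
Qed.

End extended_arithmetic.

Lemma posp_ge0 {R : realType} (r : R) : 0 <= maxr r 0.
Proof. by rewrite le_max lexx orbT. Qed.

Lemma posp_sub_negp {R : realType} (r : R) : maxr r 0 - maxr (- r) 0 = r.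
Proof. by rewrite /maxr; case: ifPn => ?; case: ifPn => ?; lra. Qed.

Section posneg_integrals.
Context {d : measure_display} {T : measurableType d} {R : realType}.
Local Open Scope ereal_scope.

Lemma measurable_posp (f : T -> R) :
  measurable_fun setT f -> measurable_fun setT (fun x => maxr (f x) 0%R).
Proof. by move=> mf; apply: measurable_maxr => //; exact: measurable_cst. Qed.

Lemma measurable_negp (f : T -> R) :
  measurable_fun setT f -> measurable_fun setT (fun x => maxr (- f x) 0)%R.
Proof. by move=> mf; apply/measurable_posp/measurable_funN. Qed.

Lemma integral_posp_ge0 (mu : {measure set T -> \bar R}) (f : T -> R) :
  0 <= \int[mu]_x (maxr (f x) 0)%:E.
Proof. by apply: integral_ge0 => x _; rewrite lee_fin posp_ge0. Qed.

Lemma funepos_EFin (f : T -> R) : (EFin \o f)^\+ = (fun x => (maxr (f x) 0)%:E).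
Proof. by apply/funext => x; rewrite funeposE /= EFin_max. Qed.

Lemma funeneg_EFin (f : T -> R) : (EFin \o f)^\- = (fun x => (maxr (- f x) 0)%:E).
Proof. by apply/funext => x; rewrite funenegE /= EFin_max. Qed.

Lemma integral_posnegE (mu : {measure set T -> \bar R}) (f : T -> R) :
  \int[mu]_x (f x)%:E =
  \int[mu]_x (maxr (f x) 0)%:E - \int[mu]_x (maxr (- f x) 0)%:E.
Proof. by rewrite (integralE _ _ (EFin \o f)) funepos_EFin funeneg_EFin. Qed.

End posneg_integrals.

Section gibbs_inequality.
Context {d : measure_display} {T : measurableType d} {R : realType}.
Local Open Scope ereal_scope.

Variables (m mu : probability T R) (a : T -> R).
Hypotheses (a_ge0 : forall x, (0 <= a x)%R) (ma : measurable_fun setT a)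
  (mu_density : forall A, measurable A -> mu A = \int[m]_(x in A) (a x)%:E).

Let mu_densityE := @integral_density _ _ _ mu m a a_ge0 ma mu_density.

(* The negative part of the entropy [E(mu|m) = \int ln a dmu] has integral
   at most 1; in particular the entropy never takes the value [-oo]. *)
Lemma integral_negp_ln_density : \int[mu]_x (maxr (- ln (a x)) 0)%:E <= 1.
Proof.
have mnegp := measurable_negp _ (measurableT_comp (@measurable_ln R) ma).
rewrite -mu_densityE; last 2 first.
- by move=> x; rewrite lee_fin posp_ge0.
- exact/measurable_EFinP.
apply: (@le_trans _ _ (\int[m]_x 1%:E)); last by rewrite integral_cst_probability.
apply: ge0_le_integral => //.
- by move=> x _; rewrite -EFinM lee_fin mulr_ge0 ?posp_ge0.
- by apply/measurable_EFinP; exact: measurable_funM.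
- move=> x _; rewrite -EFinM lee_fin mulrC.
  have := @mul_posp_sub_ln_le R (a x) 0 (a_ge0 x); rewrite sub0r => /le_trans; apply.
  by rewrite sub0r expR_le1 lerN10.
Qed.

Section with_loss.
Variables (L : T -> R) (beta W : R).
Hypotheses (mL : measurable_fun setT L) (W_gt0 : (0 < W)%R)
  (gibbs_mass : \int[m]_x (expR (- (beta * L x)) / W)%:E <= 1).

(* Slack of the pointwise Gibbs inequality [beta L + ln a >= 1 - ln W - slack]. *)
Let slack x := (maxr (1 - ln W - beta * L x - ln (a x)) 0)%R.

Let mslack : measurable_fun setT slack.
Proof.
apply/measurable_posp/measurable_funB; last exact: measurableT_comp.
by apply: measurable_funB => //; exact: measurable_funM.
Qed.

(* The slack has [mu]-integral at most 1: after the change of density this is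
   the Fenchel-Young inequality integrated against [m]. *)
Lemma integral_gibbs_slack : \int[mu]_x (slack x)%:E <= 1.
Proof.
rewrite -mu_densityE; last 2 first.
- by move=> x; rewrite lee_fin posp_ge0.
- exact/measurable_EFinP.
apply: le_trans gibbs_mass; apply: ge0_le_integral => //.
- by move=> x _; rewrite -EFinM lee_fin mulr_ge0 ?posp_ge0.
- by apply/measurable_EFinP; exact: measurable_funM.
- apply/measurable_EFinP/measurable_funM => //.
  by apply/measurableT_comp/measurable_funN => //; exact: measurable_funM.
- move=> x _; rewrite -EFinM lee_fin mulrC.
  have := @mul_posp_sub_ln_le R (a x) (1 - ln W - beta * L x)%R (a_ge0 x) => /le_trans; apply.
  rewrite (_ : _ - 1 = - (beta * L x) + - ln W)%R; last by lra.
  by rewrite expRD [expR (- ln W)]expRN lnK ?posrE.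
Qed.

(* Gibbs variational inequality, for a measure with a density: the
   integrated pointwise bound [beta L + ln a >= 1 - ln W - slack], rearranged
   so that both sides are nonnegative and can be integrated separately. *)
Lemma gibbs_inequality_density : (0 < beta)%R -> integral_well_defined mu L ->
  (- ln W / beta)%:E <=
  dual_adde (\int[mu]_x (L x)%:E) (\int[mu]_x (ln (a x))%:E * (beta^-1)%:E).
Proof.
move=> beta_gt0 [_ L_wd]; pose c := (1 - ln W)%R.
have mlna : measurable_fun setT (fun x => ln (a x)) := measurableT_comp (@measurable_ln R) ma.
pose lhs x := (maxr (- ln (a x)) 0 + beta * maxr (- L x) 0 + 0 + maxr c 0)%R.
pose rhs x := (maxr (ln (a x)) 0 + beta * maxr (L x) 0 + slack x + maxr (- c) 0)%R.
have pointwise x : (lhs x <= rhs x)%R.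
  have := posp_sub_negp (ln (a x)); have := posp_sub_negp c.
  have : (c - beta * L x - ln (a x) <= slack x)%R by rewrite le_max lexx.
  have : (beta * maxr (L x) 0 - beta * maxr (- L x) 0 = beta * L x)%R.
    by rewrite -mulrBr posp_sub_negp.
  rewrite /lhs /rhs; lra.
have integrated : \int[mu]_x (lhs x)%:E <= \int[mu]_x (rhs x)%:E.
  apply: ge0_le_integral => //.
  - by move=> x _; rewrite lee_fin /lhs !addr_ge0 ?mulr_ge0 ?posp_ge0 ?(ltW beta_gt0).
  - apply/measurable_EFinP; rewrite /lhs.
    by repeat apply: measurable_funD => //; [exact: measurable_negp|
      apply: measurable_funM => //; exact: measurable_negp].
  - apply/measurable_EFinP; rewrite /rhs.
    by repeat apply: measurable_funD => //; [exact: measurable_posp|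
      apply: measurable_funM => //; exact: measurable_posp].
  - by move=> x _; rewrite lee_fin.
rewrite /lhs /rhs !integral_ge0_combination ?integral_cst_probability ?posp_ge0 ?(ltW beta_gt0) // in integrated.
all: try by move=> x; exact: posp_ge0.
all: try by [apply: measurable_posp | apply: measurable_negp].
rewrite (integral_posnegE mu L) (integral_posnegE mu (fun x => ln (a x))).
rewrite funepos_EFin funeneg_EFin in L_wd.
move: integrated; apply: dual_adde_lower_bound; rewrite ?integral_posp_ge0 //.
- exact: integral_negp_ln_density.
- by rewrite integral_gibbs_slack andbT.
- exact: posp_sub_negp.
Qed.

End with_loss.
End gibbs_inequality.

Section relative_entropy.
Context {d : measure_display} {T : measurableType d} {R : realType}.
Local Open Scope ereal_scope.

Lemma rel_entropy_dominated (m mu : probability T R) :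
  charge_of_finite_measure mu `<< m ->
  rel_entropy mu m =
  \int[mu]_x (ln (fine (Radon_Nikodym (charge_of_finite_measure mu) m x)))%:E.
Proof. by rewrite /rel_entropy; case: pselect. Qed.

Lemma rel_entropy_not_dominated (m mu : probability T R) :
  ~ charge_of_finite_measure mu `<< m -> rel_entropy mu m = +oo.
Proof. by rewrite /rel_entropy; case: pselect. Qed.

Lemma rel_entropy_density (m mu : probability T R) :
  charge_of_finite_measure mu `<< m ->
  exists a : T -> R, [/\ forall x, (0 <= a x)%R, measurable_fun setT a,
    forall A, measurable A -> mu A = \int[m]_(x in A) (a x)%:E &
    rel_entropy mu m = \int[mu]_x (ln (a x))%:E].
Proof.
move=> dom; have mu_m : mu `<< m := dom.
pose f := Radon_Nikodym_SigmaFinite.f mu m.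
have f_ge0 := Radon_Nikodym_SigmaFinite.f_ge0 mu_m.
have f_fin := Radon_Nikodym_SigmaFinite.f_fin_num mu_m.
have mf : measurable_fun setT f.
  exact: measurable_int (Radon_Nikodym_SigmaFinite.f_integrable mu_m).
exists (fun x => fine (f x)); split.
- by move=> x; rewrite fine_ge0.
- exact: measurableT_comp (fine_measurable measurableT) mf.
- move=> A mA; rewrite (Radon_Nikodym_SigmaFinite.f_integral mu_m) //.
  by apply: eq_integral => x _; rewrite fineK.
(* the two Radon-Nikodym derivatives agree [m]-a.e., hence [mu]-a.e. *)
have f_RN : ae_eq mu setT f (Radon_Nikodym (charge_of_finite_measure mu) m).
  exact/(null_dominates_ae_eq measurableT mu_m)/ae_eq_Radon_Nikodym_SigmaFinite.
rewrite rel_entropy_dominated //; apply: ae_eq_integral => //.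
- apply/measurable_EFinP/measurableT_comp; first exact: measurable_ln.
  apply: measurableT_comp (fine_measurable measurableT) _.
  exact: measurable_int (Radon_Nikodym_integrable dom).
- apply/measurable_EFinP/measurableT_comp; first exact: measurable_ln.
  exact: measurableT_comp (fine_measurable measurableT) mf.
- by apply: filterS f_RN => x fx _; rewrite fx.
Qed.

Lemma gibbs_inequality (m mu : probability T R) (L : T -> R) (beta W : R) :
  (0 < beta)%R -> (0 < W)%R -> measurable_fun setT L ->
  \int[m]_x (expR (- (beta * L x)) / W)%:E <= 1 ->
  integral_well_defined mu L ->
  (- ln W / beta)%:E <=
  dual_adde (\int[mu]_x (L x)%:E) (rel_entropy mu m * (beta^-1)%:E).
Proof.
move=> beta_gt0 W_gt0 mL mass L_wd.
have [dom|ndom] := pselect (charge_of_finite_measure mu `<< m); last first.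
  rewrite rel_entropy_not_dominated // gt0_mulye ?lte_fin ?invr_gt0 //.
  by case: (\int[mu]_x (L x)%:E) => [r| |] /=; rewrite leey.
have [a [a_ge0 ma mu_density ->]] := rel_entropy_density m mu dom.
exact: (gibbs_inequality_density m mu a a_ge0 ma mu_density L beta W mL W_gt0 mass beta_gt0 L_wd).
Qed.

End relative_entropy.

Section barycenter_expconcave.
Context {R : realType} {disp : measure_display} {M : measurableType disp}.
Variable dist : M -> M -> R.
Local Open Scope ereal_scope.

(* Jensen's inequality for exp-concave functions at a barycenter: under (A2)
   applied to the geodesically convex function [-e^(-beta f)], the barycenter
   [x] of [mu] satisfies [\int e^(-beta f) dmu <= e^(-beta f(x))]. *)
Lemma barycenter_expconcave (mu : probability M R) (x : M) (f : M -> R) (beta : R) :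
  A2 dist -> in_P2 dist mu -> barycenter dist mu x ->
  geod_expconcave dist beta f -> measurable_fun setT f ->
  \int[mu]_y (expR (- (beta * f y)))%:E < +oo ->
  \int[mu]_y (expR (- (beta * f y)))%:E <= (expR (- (beta * f x)))%:E.
Proof.
move=> jensen P2mu bary expc mf fin.
have mw : measurable_fun setT (fun y => expR (- (beta * f y)))%R.
  apply: measurableT_comp; first exact: measurable_expR.
  by apply/measurable_funN/measurable_funM => //; exact: measurable_cst.
have int_negw : mu.-integrable setT (EFin \o (fun y => - expR (- (beta * f y))))%R.
  apply/integrableP; split; first exact/measurable_EFinP/measurable_funN.
  under eq_integral do rewrite /comp abse_EFin normrN ger0_norm ?expR_ge0 //.
  exact: fin.
have := jensen mu x _ P2mu bary expc (or_intror int_negw).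
under eq_integral do rewrite EFinN.
by rewrite integral_ge0N => [|y _]; rewrite ?lee_fin ?expR_ge0 // EFinN leeN2.
Qed.

End barycenter_expconcave.

Section exponential_weights.
Context {d : measure_display} {T : measurableType d} {R : realType}.
Local Open Scope ereal_scope.

Variables (m : probability T R) (beta : R) (loss : nat -> T -> R)
  (mt : nat -> probability T R).
Hypotheses (mloss : forall t, (1 <= t)%N -> measurable_fun setT (loss t))
  (mt1 : forall A, measurable A -> mt 1%N A = m A)
  (ewb_update : forall t, (1 <= t)%N ->
     let Z := \int[mt t]_x (expR (- (beta * loss t x)))%:E in
     (0 < Z < +oo) /\
     forall A, measurable A ->
       mt t.+1 A = \int[mt t]_(x in A) (expR (- (beta * loss t x)))%:E * ((fine Z)^-1)%:E).

(* Normalizing constant of round [t]; [norm_prod k] is the product of the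
   first [k - 1] of them, and [cumloss k] the cumulated loss before round [k]. *)
Definition ewb_normalizer t : R := fine (\int[mt t]_x (expR (- (beta * loss t x)))%:E).
Definition norm_prod k : R := \prod_(1 <= s < k) ewb_normalizer s.
Definition cumloss k x : R := \sum_(1 <= s < k) loss s x.

Lemma ewb_normalizerE t : (1 <= t)%N ->
  \int[mt t]_x (expR (- (beta * loss t x)))%:E = (ewb_normalizer t)%:E.
Proof.
move=> t1; have [/andP[Z_gt0 Z_fin] _] := ewb_update _ t1.
by rewrite /ewb_normalizer fineK // ge0_fin_numE // ltW.
Qed.

Lemma ewb_normalizer_gt0 t : (1 <= t)%N -> (0 < ewb_normalizer t)%R.
Proof. by move=> t1; have [Z_bounds _] := ewb_update _ t1; exact: fine_gt0. Qed.

Lemma norm_prod_gt0 k : (0 < norm_prod k.+1)%R.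
Proof.
elim: k => [|k IH]; first by rewrite /norm_prod big_geq.
by rewrite /norm_prod big_nat_recr //= mulr_gt0 // ewb_normalizer_gt0.
Qed.

Lemma ln_norm_prod k : ln (norm_prod k.+1) = (\sum_(1 <= s < k.+1) ln (ewb_normalizer s))%R.
Proof.
elim: k => [|k IH]; first by rewrite /norm_prod !big_geq // ln1.
rewrite /norm_prod !(big_nat_recr k.+1) //= lnM ?posrE ?ewb_normalizer_gt0 //.
  by rewrite -IH.
exact: norm_prod_gt0.
Qed.

Lemma measurable_cumloss k : measurable_fun setT (cumloss k.+1).
Proof.
elim: k => [|k IH].
  rewrite (_ : cumloss 1 = cst 0%R); first exact: measurable_cst.
  by apply/funext => x; rewrite /cumloss big_geq.
rewrite (_ : cumloss k.+2 = fun x => cumloss k.+1 x + loss k.+1 x)%R.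
  by apply: measurable_funD => //; exact: mloss.
by apply/funext => x; rewrite /cumloss big_nat_recr.
Qed.

Lemma ewb_step t (f : T -> \bar R) : (1 <= t)%N ->
  (forall x, 0 <= f x) -> measurable_fun setT f ->
  \int[mt t.+1]_x f x =
  \int[mt t]_x (f x * (expR (- (beta * loss t x)) / ewb_normalizer t)%:E).
Proof.
move=> t1 f0 mf; apply/esym/integral_density => //.
- by move=> x; rewrite divr_ge0 ?expR_ge0 ?ltW ?ewb_normalizer_gt0.
- apply: measurable_funM; last exact: measurable_cst.
  apply: measurableT_comp; first exact: measurable_expR.
  by apply/measurable_funN/measurable_funM; [exact: measurable_cst|exact: mloss].
- move=> A mA; have [_ upd] := ewb_update _ t1.
  apply: (etrans (upd A mA)); rewrite -ge0_integralZr //.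
  + apply/measurable_funTS/measurable_EFinP/measurableT_comp => //.
    by apply/measurable_funN/measurable_funM; [exact: measurable_cst|exact: mloss].
  + by rewrite lee_fin invr_ge0 ltW // -/(ewb_normalizer t) ewb_normalizer_gt0.
Qed.

Lemma ewb_density k (f : T -> \bar R) :
  (forall x, 0 <= f x) -> measurable_fun setT f ->
  \int[mt k.+1]_x f x =
  \int[m]_x (f x * (expR (- (beta * cumloss k.+1 x)) / norm_prod k.+1)%:E).
Proof.
elim: k f => [|k IH] f f0 mf.
  under [RHS]eq_integral do
    rewrite /cumloss /norm_prod !big_geq // mulr0 oppr0 expR0 divr1 mule1.
  by apply: eq_measure_integral => A mA _; exact: mt1.
rewrite ewb_step // IH; last 2 first.
- by move=> x; rewrite mule_ge0 // lee_fin divr_ge0 ?expR_ge0 ?ltW ?ewb_normalizer_gt0.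
- apply/emeasurable_funM/measurable_EFinP => //; apply: measurable_funM => //.
  apply: measurableT_comp; first exact: measurable_expR.
  by apply/measurable_funN/measurable_funM; [exact: measurable_cst|exact: mloss].
apply: eq_integral => x _; rewrite -muleA -EFinM; congr (_ * _%:E).
rewrite /cumloss /norm_prod (big_nat_recr k.+1) //= (big_nat_recr k.+1) //=.
rewrite mulrDr opprD expRD.
have := ewb_normalizer_gt0 k.+1 isT; have := norm_prod_gt0 k.
by rewrite /norm_prod => P_gt0 Z_gt0; field; rewrite !gt_eqF.
Qed.

Lemma ewb_gibbs_mass n :
  \int[m]_x (expR (- (beta * cumloss n.+1 x)) / norm_prod n.+1)%:E = 1.
Proof.
have := ewb_density n (fun _ => 1) (fun _ => lee01) (measurable_cst _).
rewrite integral_cst_probability => ->.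
by apply: eq_integral => x _; rewrite mul1e.
Qed.

Variables (dist : T -> T -> R) (xs : nat -> T).
Hypotheses (jensen : A2 dist) (beta_gt0 : (0 < beta)%R)
  (expc : forall t, (1 <= t)%N -> geod_expconcave dist beta (loss t))
  (mt_P2 : forall t, (1 <= t)%N -> in_P2 dist (mt t))
  (xs_bary : forall t, (1 <= t)%N -> barycenter dist (mt t) (xs t)).

Lemma ewb_round_bound t : (1 <= t)%N ->
  (loss t (xs t) <= - ln (ewb_normalizer t) / beta)%R.
Proof.
move=> t1; have Z_gt0 := ewb_normalizer_gt0 t t1.
have := barycenter_expconcave _ _ _ _ _ jensen (mt_P2 t t1) (xs_bary t t1) (expc t t1) (mloss t t1).
rewrite ewb_normalizerE // ltry lee_fin => /(_ isT) Z_le.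
have ln_bound : (ln (ewb_normalizer t) <= - (beta * loss t (xs t)))%R.
  by rewrite -[leRHS]expRK ler_ln ?posrE ?expR_gt0.
by rewrite ler_pdivlMr // mulrC; lra.
Qed.

Lemma ewb_cumulative_bound n :
  (\sum_(1 <= t < n.+1) loss t (xs t) <= - ln (norm_prod n.+1) / beta)%R.
Proof.
rewrite ln_norm_prod -sumrN mulr_suml; apply: ler_sum_nat => t /andP[t1 _].
exact: ewb_round_bound.
Qed.

End exponential_weights.

Theorem mainTheorem11 (R : realType) (disp : measure_display)
  (M : measurableType disp) (dist : M -> M -> R)
  (m : probability M R) (beta : R)
  (loss : nat -> M -> R) (mt : nat -> probability M R) (xs : nat -> M) :
  is_metric dist -> metric_complete dist -> metric_separable dist ->
  geodesic_space dist -> borel_of_dist dist ->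
  in_P2 dist m -> A1 dist -> A2 dist ->
  0 < beta ->
  (forall t, (1 <= t)%N -> measurable_fun setT (loss t)) ->
  (forall t, (1 <= t)%N -> geod_expconcave dist beta (loss t)) ->
  (* EWB forecaster, well defined *)
  (forall A, measurable A -> mt 1%N A = m A) ->
  (forall t, (1 <= t)%N ->
     let Z := (\int[mt t]_x (expR (- (beta * loss t x)))%:E)%E in
     (0 < Z < +oo)%E /\
     forall A, measurable A ->
       mt t.+1 A =
       (\int[mt t]_(x in A) (expR (- (beta * loss t x)))%:E * ((fine Z)^-1)%:E)%E) ->
  (forall t, (1 <= t)%N -> in_P2 dist (mt t)) ->
  (forall t, (1 <= t)%N -> barycenter dist (mt t) (xs t)) ->
  forall n, (1 <= n)%N ->
    let L := fun x => \sum_(1 <= t < n.+1) loss t x in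
    ((\sum_(1 <= t < n.+1) loss t (xs t))%:E <=
     ereal_inf [set v | exists mu : probability M R,
        integral_well_defined mu L /\
        v = dual_adde (\int[mu]_x (L x)%:E)
                      (rel_entropy mu m * (beta^-1)%:E)])%E.
Proof.
move=> _ _ _ _ _ _ _ jensen beta_gt0 mloss expc mt1 ewb_update mt_P2 xs_bary n _ /=.
apply/ereal_infP => _ [mu [L_wd ->]].
apply: le_trans (_ : _ <= (- ln (norm_prod beta loss mt n.+1) / beta)%:E)%E _.
  rewrite lee_fin; exact: (ewb_cumulative_bound _ _ _ mloss ewb_update _ _ jensen beta_gt0 expc mt_P2 xs_bary n).
apply: gibbs_inequality => //.
- exact: norm_prod_gt0.
- exact: measurable_cumloss.
- by rewrite ewb_gibbs_mass.
Qed.
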